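(* In the situation of Theorem 2 (a fully regular system $A(y)=b$ with $A=A_\ell\sigma^\ell+\dots+A_0$, $A_i\in\mathbb{F}[t]^{n\times n}$, $b\in\mathbb{F}[t]^n$, $\det A_\ell\neq 0$; a $P\in\mathrm{GL}_n(\mathbb{F}(t)[\sigma,\sigma^{-1}])$ with $PA=\sum_{i=0}^{\tilde\ell}\tilde A_i\sigma^i$, $\tilde A_i\in\mathbb{F}[t]^{n\times n}$, $P(b)\in\mathbb{F}[t]^n$, $\det\tilde A_0\ne0$; $m$ the common denominator of $A_\ell^{-1}$, $p$ the common denominator of $\tilde A_0^{-1}$; and a solution $y=d^{-1}z$ in reduced representation), one has $$\mathrm{disp}(\operatorname{ap}(d))\le\mathrm{disp}\big(\sigma^{-\ell}(\operatorname{ap}(m)),\operatorname{ap}(p)\big).$$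
   Context: All fields contain $\mathbb{Q}$. $(\mathbb{F}(t),\sigma)$ is a $\Pi\Sigma$-extension of the difference field $(\mathbb{F},\sigma)$: $\sigma$ is an automorphism of the rational function field $\mathbb{F}(t)$ restricting to an automorphism of $\mathbb{F}$, with $\sigma(t)=t+\beta$ ($\beta\in\mathbb{F}\setminus\{0\}$, $\Sigma$-monomial) or $\sigma(t)=\alpha t$ ($\alpha\in\mathbb{F}\setminus\{0\}$, $\Pi$-monomial), and the fixed field of $\sigma$ on $\mathbb{F}(t)$ equals that on $\mathbb{F}$. For $a,b\in\mathbb{F}[t]\setminus\{0\}$: $\mathrm{spread}(a,b)=\{k\ge0:\gcd(a,\sigma^k(b))\notin\mathbb{F}\}$, $\mathrm{disp}(a,b)=\max\mathrm{spread}(a,b)$ ($\max\emptyset=-\infty$, max of infinite set $=\infty$), $\mathrm{disp}(a)=\mathrm{disp}(a,a)$. $\mathrm{per}(a)=1$ for a $\Sigma$-monomial, $t^\mu$ with $\mu$ maximal such that $t^\mu\mid a$ for a $\Pi$-monomial; $\operatorname{ap}(a)=a/\mathrm{per}(a)$. Reduced representation: $d\in\mathbb{F}[t]\setminus\{0\}$, $z\in\mathbb{F}[t]^n$, $\gcd(z_1,\dots,z_n,d)=1$. $\mathbb{F}(t)[\sigma]$ is the Ore polynomial ring with $\sigma a=\sigma(a)\sigma$, $\mathbb{F}(t)[\sigma,\sigma^{-1}]$ its localisation at powers of $\sigma$; operators act on $\mathbb{F}(t)$ by $(\sum a_i\sigma^i)(\alpha)=\sum a_i\sigma^i(\alpha)$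 and operator matrices act on vectors entrywise as matrix–vector products; unimodular means invertible over the same ring. A square system $A(y)=b$ with $A=\sum_{i=0}^\ell A_i\sigma^i$ is fully regular if $\det A_\ell\ne0$ and there is a unimodular $P$ over $\mathbb{F}(t)[\sigma,\sigma^{-1}]$ with $PA\in\mathbb{F}(t)[\sigma]^{n\times n}$ having trailing coefficient matrix of nonzero determinant. *)

From HB Require Import structures.
From mathcomp Require Import all_boot all_order all_algebra.
From Stdlib Require Import ClassicalEpsilon.
Set Implicit Arguments. Unset Strict Implicit. Unset Printing Implicit Defensive.
Import GRing.Theory.
Local Open Scope ring_scope.

(* Kind of the monomial t: Sigma-monomial sigma(t) = t + beta,
   Pi-monomial sigma(t) = alpha * t. *)
Inductive monomial_kind (F : fieldType) := SigmaMon of F | PiMon of F.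

Notation ratfun F := {fraction {poly F}}.
Definition frc (F : fieldType) (a : {poly F}) : ratfun F := FracField.tofrac a.

Definition sig_t (F : fieldType) (k : monomial_kind F) : {poly F} :=
  match k with SigmaMon b => 'X + b%:P | PiMon a => a *: 'X end.
Definition sig_tinv (F : fieldType) (k : monomial_kind F) : {poly F} :=
  match k with SigmaMon b => 'X - b%:P | PiMon a => a^-1 *: 'X end.

Record PiSigma (F : fieldType) := {
  char0 : [pchar F] =i pred0;
  s0 : {rmorphism F -> F};
  s0i : F -> F;
  s0K : cancel s0 s0i;
  s0iK : cancel s0i s0;
  kind : monomial_kind F;
  kind_nz : match kind with SigmaMon b => b != 0 | PiMon a => a != 0 end;
  sK : {rmorphism ratfun F -> ratfun F};
  sKi : ratfun F -> ratfun F;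
  sKK : cancel sK sKi;
  sKiK : cancel sKi sK;
  sK_poly : forall a : {poly F}, sK (frc a) = frc (map_poly s0 a \Po sig_t kind);
  sK_const : forall x, sK x = x -> exists2 c : F, x = frc c%:P & s0 c = c
}.

Section Defs.
Variable F : fieldType.
Variable E : PiSigma F.
Local Notation K := (ratfun F).

Definition sigP (a : {poly F}) : {poly F} := map_poly (s0 E) a \Po sig_t (kind E).
Definition sigPinv (q : {poly F}) : {poly F} := map_poly (s0i E) (q \Po sig_tinv (kind E)).

Definition spread (a b : {poly F}) (k : nat) : Prop :=
  (1 < size (gcdp a (iter k sigP b)))%N.

Inductive extnat := MInf | Fin of nat | PInf.
Definition ext_le (x y : extnat) : bool :=
  match x, y with
  | MInf, _ => true
  | _, PInf => true
  | Fin a, Fin b => (a <= b)%N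
  | _, _ => false
  end.

Definition is_max_of (S : nat -> Prop) (e : extnat) : Prop :=
  match e with
  | MInf => forall k, ~ S k
  | Fin m => S m /\ forall k, S k -> (k <= m)%N
  | PInf => forall m, exists k, S k /\ (m < k)%N
  end.

Definition disp (a b : {poly F}) : extnat :=
  epsilon (inhabits MInf) (is_max_of (spread a b)).

Definition mu (a : {poly F}) : nat := \max_(i < size a | 'X^i %| a) i.
Definition per (a : {poly F}) : {poly F} :=
  match kind E with SigmaMon _ => 1 | PiMon _ => 'X^(mu a) end.
Definition ap (a : {poly F}) : {poly F} := a %/ per a.

Definition spow (j : int) : K -> K :=
  match j with Posz k => iter k (sK E) | Negz k => iter k.+1 (sKi E) end.

(* Operator matrices over F(t)[sigma, sigma^{-1}]:
   Lop lo [:: C_0; ...; C_r] denotes sum_i C_i sigma^(lo + i). *)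
Record lop (n : nat) := Lop { lo : int; cs : seq 'M[K]_n }.

Definition lcoef n (P : lop n) (k : int) : 'M[K]_n :=
  if (lo P <= k)%R then nth 0 (cs P) `|k - lo P|%N else 0.

(* coefficient of sigma^k in the Ore product P * Q *)
Definition lmul n (P Q : lop n) (k : int) : 'M[K]_n :=
  \sum_(j < size (cs P))
     nth 0 (cs P) j *m map_mx (spow (lo P + j%:Z)) (lcoef Q (k - (lo P + j%:Z))).

Definition lone n (k : int) : 'M[K]_n := if k == 0 then 1%:M else 0.

Definition unimodular n (P : lop n) : Prop :=
  exists Q : lop n, (forall k, lmul Q P k = lone n k) /\ (forall k, lmul P Q k = lone n k).

Definition lapply n (P : lop n) (v : 'cV[K]_n) : 'cV[K]_n :=
  \sum_(j < size (cs P)) nth 0 (cs P) j *m map_mx (spow (lo P + j%:Z)) v.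

Definition liftm m n (M : 'M[{poly F}]_(m, n)) : 'M[K]_(m, n) := map_mx (@frc F) M.

Definition polyop n (A : seq 'M[{poly F}]_n) : lop n := Lop 0 (map (@liftm n n) A).

Definition has_denom m n (M : 'M[K]_(m, n)) (q : {poly F}) : Prop :=
  forall i j, exists r : {poly F}, frc q * M i j = frc r.
Definition common_denom m n (M : 'M[K]_(m, n)) (q : {poly F}) : Prop :=
  [/\ q != 0, has_denom M q & forall q', q' != 0 -> has_denom M q' -> q %| q'].

Definition reduced n (d : {poly F}) (z : 'cV[{poly F}]_n) : Prop :=
  d != 0 /\ coprimep d (\big[@gcdp F/0]_(i < n) z i 0).

End Defs.

(* Let k be in spread(ap d, ap d). An irreducible common factor of ap d and
   sigma^k (ap d) lies on a sigma-orbit of irreducible factors of ap d; as these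
   factors are aperiodic the orbit is not periodic and has two ends g and
   sigma^kk g inside ap d, with kk >= k. Isolating the leading coefficient of
   A(y) = b gives A_l sigma^l y = b - sum_(i<l) A_i sigma^i y, so sigma^l d
   divides m * prod_(i<l) sigma^i d * sigma^l z_j for every j. Since sigma^kk g is
   the right end of its orbit and d^-1 z is reduced, sigma^(l+kk) g divides m.
   Symmetrically, the trailing coefficient of the transformed system
   PA(y) = P(b) yields g | p. Thus sigma^kk g divides both sigma^-l (ap m) and
   sigma^kk (ap p), i.e. kk lies in their spread. *)

From HB Require Import structures.
From mathcomp Require Import all_boot all_order all_algebra.
From Stdlib Require Import ClassicalEpsilon Classical.
From mathcomp Require Import zify.
Import GRing.Theory.
Local Open Scope ring_scope.
Set Implicit Arguments. Unset Strict Implicit. Unset Printing Implicit Defensive.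

Section PolyFacts.
Variable F : fieldType.
Implicit Types (a g x : {poly F}).

Lemma irredp_factor g : (1 < size g)%N -> exists2 f, irreducible_poly f & f %| g.
Proof.
elim: {g}(size g) {-2}g (leqnn (size g)) => [|N IH] g le_gN gt1_g.
  by move: le_gN; rewrite leqn0 => /eqP sz_g; rewrite sz_g in gt1_g.
have [irr_g | red_g] := classic (irreducible_poly g); first by exists g.
have [q [sz_q1 q_dvd not_eqp]] : exists q : {poly F}, [/\ size q != 1%N, q %| g & ~~ (q %= g)].
  apply: NNPP => no_q; apply: red_g; split=> // q sz_q q_g.
  by apply: NNPP => not_eqp; apply: no_q; exists q; split=> //; apply/negP.
have g_neq0 : g != 0 by rewrite -size_poly_gt0 ltnW.
have q_neq0 : q != 0 by apply: contraNneq g_neq0 => q0; rewrite q0 dvd0p in q_dvd.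
have lt_qg : (size q < size g)%N.
  rewrite ltn_neqAle dvdp_leq // andbT.
  by apply: contra not_eqp => /eqP sz_qg; rewrite -dvdp_size_eqp // sz_qg.
have gt1_q : (1 < size q)%N.
  by move: sz_q1 q_neq0; rewrite -size_poly_eq0; case: (size q) => [|[|]].
have le_qN : (size q <= N)%N by rewrite -ltnS (leq_trans lt_qg le_gN).
have [f irr_f f_q] := IH q le_qN gt1_q.
by exists f => //; apply: dvdp_trans q_dvd.
Qed.

Lemma count_dvdp_lt_size (h : nat -> {poly F}) x (s : seq nat) :
  x != 0 -> (forall j, 1 < size (h j))%N -> (forall i j, i != j -> coprimep (h i) (h j)) ->
  uniq s -> (count (fun j => dvdp (h j) x) s < size x)%N.
Proof.
move=> x_neq0 gt1_h coprime_h.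
pose H s := \prod_(j <- s | h j %| x) h j.
suff {s} ind s : uniq s -> H s %| x /\ (count (fun j => dvdp (h j) x) s < size (H s))%N.
  by case/ind=> Hx lt_H; apply: leq_trans lt_H (dvdp_leq x_neq0 Hx).
elim: s => [|j s IHs] /=; first by rewrite /H big_nil size_poly1 dvd1p.
case/andP=> j_notin_s /IHs [Hs_x lt_Hs]; rewrite /H big_cons.
case: ifP => hj_x; last by rewrite add0n.
have cop : coprimep (h j) (H s).
  rewrite /H big_seq_cond; apply: (big_ind (coprimep (h j))) => [|a b|i].
  - exact: coprimep1.
  - by rewrite coprimepMr => -> ->.
  - by case/andP=> i_s _; apply: coprime_h; apply: contraNneq j_notin_s => ->.
have H_neq0 : H s != 0 by apply: contraTneq Hs_x => ->; rewrite dvd0p.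
have hj_neq0 : h j != 0 by rewrite -size_poly_gt0 ltnW.
split; first by rewrite Gauss_dvdp // hj_x.
rewrite size_mul // add1n -subn1; move: lt_Hs (gt1_h j); rewrite /H.
by move: (count _ _) (size _) (size (h j)) => c S T; lia.
Qed.

Lemma exists_last_dvdp (h : nat -> {poly F}) x k :
  x != 0 -> (forall j, 1 < size (h j))%N -> (forall i j, i != j -> coprimep (h i) (h j)) ->
  h k %| x -> exists2 kk, (k <= kk)%N & h kk %| x /\ forall j, (kk < j)%N -> ~~ (h j %| x).
Proof.
move=> x_neq0 gt1_h coprime_h hk_x; pose P j := h j %| x.
have count_lt N : (count P (iota 0 N) < size x)%N.
  exact: count_dvdp_lt_size (iota_uniq 0 N).
have [M ub] : exists M, forall j, P j -> (j <= M)%N.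
  apply: NNPP => unbounded.
  have above N : exists2 j, (N <= j)%N & P j.
    apply: NNPP => none; apply: unbounded; exists N => j Pj.
    by rewrite leqNgt; apply/negP => lt_Nj; apply: none; exists j => //; apply: ltnW.
  suff [N le_xN] : exists N, (size x <= count P (iota 0 N))%N.
    by have := count_lt N; rewrite ltnNge le_xN.
  elim: (size x) => [|c [N le_cN]]; first by exists 0%N.
  have [j le_Nj Pj] := above N; exists j.+1.
  rewrite -(subnKC (leqW le_Nj)) iotaD count_cat add0n.
  suff : (0 < count P (iota N (j.+1 - N)))%N by lia.
  by rewrite -has_count; apply/hasP; exists j; rewrite // mem_iota; lia.
have [kk Pkk max_kk] := ex_maxnP (ex_intro P k hk_x) ub.
exists kk; first exact: max_kk.
by split=> // j lt_kkj; apply/negP => /max_kk; rewrite leqNgt lt_kkj.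
Qed.

Lemma dvdp_can_morph (f g : {poly F} -> {poly F}) :
  cancel f g -> {morph f : a b / a * b} -> {morph g : a b / a * b} ->
  forall a b, (f a %| f b) = (a %| b).
Proof.
move=> fK fM gM a b; apply/idP/idP => /dvdpP [c Hc]; apply/dvdpP.
  by exists (g c); rewrite -(fK b) Hc gM fK.
by exists (f c); rewrite Hc fM.
Qed.

Lemma irredp_can (f g : {poly F} -> {poly F}) :
  cancel g f -> (forall a, size (f a) = size a) -> (forall a b, (f a %| f b) = (a %| b)) ->
  forall a, irreducible_poly a -> irreducible_poly (f a).
Proof.
move=> gK size_f dvdp_f a [gt1_a irr_a]; split=> [|c]; first by rewrite size_f.
rewrite -(gK c) size_f /eqp !dvdp_f => sz_c c_a.
by rewrite -/(_ %= _) (irr_a _ sz_c c_a).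
Qed.

End PolyFacts.

Section SigmaPoly.
Variables (F : fieldType) (E : PiSigma F).
Implicit Types (a b : {poly F}).
Local Notation sg := (sigP E).
Local Notation sgi := (sigPinv E).
Local Notation t := (sig_t (kind E)).
Local Notation ti := (sig_tinv (kind E)).

Lemma size_sig_t : size t = 2%N.
Proof.
rewrite /sig_t; have := kind_nz E; case: (kind E) => c c_neq0.
  by rewrite size_XaddC.
by rewrite size_scale // size_polyX.
Qed.

Lemma sig_t_comp_tinv : t \Po ti = 'X.
Proof.
rewrite /sig_t /sig_tinv; have := kind_nz E; case: (kind E) => c c_neq0.
  by rewrite comp_polyD comp_polyX comp_polyC subrK.
by rewrite comp_polyZ comp_polyX scalerA divff // scale1r.
Qed.

Lemma sig_tinv_comp_t : ti \Po t = 'X.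
Proof.
rewrite /sig_t /sig_tinv; have := kind_nz E; case: (kind E) => c c_neq0.
  by rewrite comp_polyB comp_polyX comp_polyC addrK.
by rewrite comp_polyZ comp_polyX scalerA mulVf // scale1r.
Qed.

Lemma s0i0 : s0i E 0 = 0.
Proof. by rewrite -{1}(rmorph0 (s0 E)) s0K. Qed.

Lemma sigPK : cancel sg sgi.
Proof.
move=> a; rewrite /sigP /sigPinv -comp_polyA sig_t_comp_tinv comp_polyXr.
by apply/polyP => i; rewrite coef_map_id0 ?s0i0 // coef_map s0K.
Qed.

Lemma sigPinvK : cancel sgi sg.
Proof.
move=> a; rewrite /sigP /sigPinv.
have -> : map_poly (s0 E) (map_poly (s0i E) (a \Po ti)) = a \Po ti.
  by apply/polyP => i; rewrite coef_map /= coef_map_id0 ?s0i0 // s0iK.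
by rewrite -comp_polyA sig_tinv_comp_t comp_polyXr.
Qed.

Lemma sigPM : {morph sg : a b / a * b}.
Proof. by move=> a b; rewrite /sigP rmorphM /= comp_polyM. Qed.

Lemma sigP1 : sg 1 = 1.
Proof. by rewrite /sigP rmorph1 comp_polyC. Qed.

Lemma sigPZ c a : sg (c *: a) = s0 E c *: sg a.
Proof. by rewrite /sigP map_polyZ comp_polyZ. Qed.

Lemma size_sigP a : size (sg a) = size a.
Proof. by rewrite /sigP size_comp_poly2 ?size_sig_t // size_map_poly. Qed.

Lemma sigP_prod (I : Type) (r : seq I) (P : pred I) (f : I -> {poly F}) :
  sg (\prod_(i <- r | P i) f i) = \prod_(i <- r | P i) sg (f i).
Proof. exact: (big_morph sg sigPM sigP1). Qed.

Lemma iter_sigPK k : cancel (iter k sg) (iter k sgi).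
Proof. by elim: k => // k IH a; rewrite iterSr /= sigPK IH. Qed.

Lemma iter_sigPinvK k : cancel (iter k sgi) (iter k sg).
Proof. by elim: k => // k IH a; rewrite iterSr /= sigPinvK IH. Qed.

Lemma iter_sigPM k : {morph iter k sg : a b / a * b}.
Proof. by elim: k => // k IH a b; rewrite /= IH sigPM. Qed.

Lemma iter_sigPinvM k : {morph iter k sgi : a b / a * b}.
Proof.
by move=> a b; rewrite -{1}(iter_sigPinvK k a) -{1}(iter_sigPinvK k b) -iter_sigPM iter_sigPK.
Qed.

Lemma size_iter_sigP k a : size (iter k sg a) = size a.
Proof. by elim: k => //= k IH; rewrite size_sigP. Qed.

Lemma size_iter_sigPinv k a : size (iter k sgi a) = size a.
Proof. by rewrite -{2}(iter_sigPinvK k a) size_iter_sigP. Qed.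

Lemma dvdp_iter_sigP k a b : (iter k sg a %| iter k sg b) = (a %| b).
Proof. exact: dvdp_can_morph (iter_sigPK k) (iter_sigPM k) (iter_sigPinvM k) a b. Qed.

Lemma dvdp_iter_sigPinv k a b : (iter k sgi a %| iter k sgi b) = (a %| b).
Proof. exact: dvdp_can_morph (iter_sigPinvK k) (iter_sigPinvM k) (iter_sigPM k) a b. Qed.

Lemma irredp_iter_sigP k a : irreducible_poly a -> irreducible_poly (iter k sg a).
Proof. exact: (irredp_can (iter_sigPinvK k) (size_iter_sigP k) (dvdp_iter_sigP k)). Qed.

Lemma irredp_iter_sigPinv k a : irreducible_poly a -> irreducible_poly (iter k sgi a).
Proof. exact: (irredp_can (iter_sigPK k) (size_iter_sigPinv k) (dvdp_iter_sigPinv k)). Qed.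

End SigmaPoly.

Section Aperiodic.
Variables (F : fieldType) (E : PiSigma F).
Implicit Types (a b g : {poly F}).
Local Notation sg := (sigP E).
Local Notation sgi := (sigPinv E).

(* The coefficient on which sigma acts through s0 alone. *)
Definition sig_coef a : F :=
  match kind E with SigmaMon _ => lead_coef a | PiMon _ => a.[0] end.

(* In the Pi case t is, up to units, the only sigma-periodic irreducible
   polynomial; aperiodic polynomials are those not divisible by t. *)
Definition aperiodic a : bool :=
  match kind E with SigmaMon _ => true | PiMon _ => a.[0] != 0 end.

Lemma sig_coef_sigP a : sig_coef (sg a) = s0 E (sig_coef a).
Proof.
rewrite /sig_coef /sigP; have := size_sig_t E; rewrite /sig_t.
case: (kind E) => c sz_t.
  rewrite lead_coef_comp ?sz_t // lead_coefXaddC expr1n mulr1.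
  by rewrite lead_coef_map_inj ?rmorph0 //; apply: fmorph_inj.
by rewrite horner_comp hornerZ hornerX mulr0 -{1}(rmorph0 (s0 E)) horner_map.
Qed.

Lemma sig_coefM a b : sig_coef (a * b) = sig_coef a * sig_coef b.
Proof. by rewrite /sig_coef; case: (kind E) => c; rewrite ?lead_coefM ?hornerM. Qed.

Lemma sig_coef_prod (I : Type) (r : seq I) (P : pred I) (f : I -> {poly F}) :
  sig_coef (\prod_(i <- r | P i) f i) = \prod_(i <- r | P i) sig_coef (f i).
Proof.
apply: (big_morph sig_coef sig_coefM).
by rewrite /sig_coef; case: (kind E) => c; rewrite ?lead_coef1 ?hornerC.
Qed.

Lemma sig_coefZ c a : sig_coef (c *: a) = c * sig_coef a.
Proof. by rewrite /sig_coef; case: (kind E) => e; rewrite ?lead_coefZ ?hornerZ. Qed.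

Lemma sig_coef_neq0 a : a != 0 -> aperiodic a -> sig_coef a != 0.
Proof. by rewrite /aperiodic /sig_coef; case: (kind E) => c // a_neq0 _; rewrite lead_coef_eq0. Qed.

Lemma aperiodic_iter_sigP k a : aperiodic (iter k sg a) = aperiodic a.
Proof.
elim: k => //= k <-; have := sig_coef_sigP (iter k sg a).
by rewrite /aperiodic /sig_coef; case: (kind E) => // c ->; rewrite fmorph_eq0.
Qed.

Lemma aperiodic_iter_sigPinv k a : aperiodic (iter k sgi a) = aperiodic a.
Proof. by rewrite -{2}(iter_sigPinvK E k a) aperiodic_iter_sigP. Qed.

Lemma aperiodic_dvdp a b : a %| b -> aperiodic b -> aperiodic a.
Proof.
rewrite /aperiodic; case: (kind E) => // c /dvdpP [e ->].
by rewrite hornerM mulf_eq0 negb_or => /andP [].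
Qed.

Lemma size_sigP_fixed a : sg a = a -> (size a <= 1)%N.
Proof.
move=> sa; have : sK E (frc a) = frc a by rewrite sK_poly -/(sigP E a) sa.
by case/sK_const => c /eqP; rewrite /frc tofrac_eq => /eqP -> _; apply: size_polyC_leq1.
Qed.

Lemma size_sigP_eigen a u : sig_coef a != 0 -> sg a = u *: a -> (size a <= 1)%N.
Proof.
move=> ca_neq0 sa.
have su : s0 E (sig_coef a) = u * sig_coef a by rewrite -sig_coef_sigP sa sig_coefZ.
have u_neq0 : u != 0.
  by move: (fmorph_eq0 (s0 E) (sig_coef a)); rewrite su mulf_eq0 (negbTE ca_neq0) orbF => ->.
rewrite -(size_scale a (invr_neq0 ca_neq0)); apply: size_sigP_fixed.
by rewrite sigPZ sa scalerA fmorphV su invfM mulrAC mulVf // mul1r.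
Qed.

(* If g | sigma^r g then sigma^r g = u g, so the product of g, ..., sigma^(r-1) g
   is a sigma-eigenvector; normalised by [sig_coef] it becomes a constant. *)
Lemma irredp_ndvdp_iter_sigP g r :
  irreducible_poly g -> aperiodic g -> (0 < r)%N -> ~~ (g %| iter r sg g).
Proof.
move=> irr_g ap_g; case: r => // r _; apply/negP => g_dvd.
have iter_neq0 i : iter i sg g != 0.
  by rewrite -size_poly_eq0 size_iter_sigP size_poly_eq0 irredp_neq0.
have [u sr] : exists u, iter r.+1 sg g = u *: g.
  have : g %= iter r.+1 sg g by rewrite -dvdp_size_eqp ?size_iter_sigP ?irredp_neq0.
  case/eqpP=> [[c1 c2]] /= /andP [c1_neq0 c2_neq0] e; exists (c1 / c2).
  by rewrite mulrC -scalerA e scalerA mulVf // scale1r.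
pose H := \prod_(i < r.+1) iter i sg g.
have sH : sg H = u *: H.
  rewrite /H sigP_prod big_ord_recr /= -/(iter r.+1 sg g) sr big_ord_recl /=.
  by rewrite -scalerAr mulrC.
have cH : sig_coef H != 0.
  by rewrite sig_coef_prod; apply/prodf_neq0 => i _; rewrite sig_coef_neq0 ?aperiodic_iter_sigP.
have g_H : g %| H by rewrite /H big_ord_recl dvdp_mulr.
have H_neq0 : H != 0 by apply/prodf_neq0 => i _.
have := leq_trans (dvdp_leq H_neq0 g_H) (size_sigP_eigen cH sH).
by case: irr_g => /ltn_geF ->.
Qed.

Lemma mu_dvdp a : 'X^(mu a) %| a.
Proof.
have [->|a_neq0] := eqVneq a 0; first by rewrite dvdp0.
have sz_a : (0 < size a)%N by rewrite size_poly_gt0.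
have : (0 < #|[pred i : 'I_(size a) | dvdp 'X^i a]|)%N.
  by apply/card_gt0P; exists (Ordinal sz_a); rewrite inE /= expr0 dvd1p.
case/(eq_bigmax_cond (fun i : 'I_(size a) => nat_of_ord i)) => i0 Xi0 mu_i0.
rewrite /mu (eq_bigl (mem [pred i : 'I_(size a) | dvdp 'X^i a])) // mu_i0.
by move: Xi0; rewrite inE.
Qed.

Lemma mu_max a k : a != 0 -> 'X^k %| a -> (k <= mu a)%N.
Proof.
move=> a_neq0 Xk_a.
have lt_ka : (k < size a)%N by have := dvdp_leq a_neq0 Xk_a; rewrite size_polyXn.
by rewrite /mu (leq_bigmax_cond (F := fun i : 'I_(size a) => nat_of_ord i) (Ordinal lt_ka)).
Qed.

Lemma ap_mul_per a : ap E a * per E a = a.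
Proof. by rewrite /ap divpK // /per; case: (kind E) => c; rewrite ?dvd1p ?mu_dvdp. Qed.

Lemma ap_dvdp a : ap E a %| a.
Proof. by rewrite -{2}(ap_mul_per a) dvdp_mulr. Qed.

Lemma ap_neq0 a : a != 0 -> ap E a != 0.
Proof. by apply: contraNneq => a0; rewrite -(ap_mul_per a) a0 mul0r. Qed.

Lemma aperiodic_ap a : a != 0 -> aperiodic (ap E a).
Proof.
move=> a_neq0; have := ap_mul_per a; rewrite /aperiodic /per.
case: (kind E) => // c a_eq; apply/negP => /eqP ap0.
suff /(mu_max a_neq0) : dvdp 'X^((mu a).+1) a by rewrite ltnn.
rewrite -{2}a_eq exprSr mulrC dvdp_mul //.
by move: (dvdp_XsubCl (ap E a) 0); rewrite polyC0 subr0 => ->; apply/eqP.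
Qed.

Lemma irredp_dvdp_ap g a : irreducible_poly g -> aperiodic g -> g %| a -> g %| ap E a.
Proof.
move=> irr_g; rewrite -{1}(ap_mul_per a) /aperiodic /per.
case: (kind E) => c g0; first by rewrite mulr1.
rewrite Gauss_dvdpl //; apply: coprimep_expr; rewrite coprimep_sym.
move: (irreducible_poly_coprime g (irredp_XsubC 0)); rewrite polyC0 subr0 => ->.
by move: (dvdp_XsubCl g 0); rewrite polyC0 subr0 => ->.
Qed.

End Aperiodic.

Section Orbit.
Variables (F : fieldType) (E : PiSigma F).
Implicit Types (g x : {poly F}).
Local Notation sg := (sigP E).
Local Notation sgi := (sigPinv E).

Lemma coprimep_iter_sigP g i j : irreducible_poly g -> aperiodic E g -> i != j ->
  coprimep (iter i sg g) (iter j sg g).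
Proof.
move=> irr_g ap_g.
suff lt_coprime i' j' : (i' < j')%N -> coprimep (iter i' sg g) (iter j' sg g).
  by rewrite neq_ltn => /orP [/lt_coprime | /lt_coprime]; rewrite // coprimep_sym.
move=> lt_ij; rewrite -(subnKC (ltnW lt_ij)) iterD.
rewrite (irreducible_poly_coprime _ (irredp_iter_sigP _ _ irr_g)) dvdp_iter_sigP.
by rewrite irredp_ndvdp_iter_sigP // subn_gt0.
Qed.

Lemma coprimep_iter_sigPinv g i j : irreducible_poly g -> aperiodic E g -> i != j ->
  coprimep (iter i sgi g) (iter j sgi g).
Proof.
move=> irr_g ap_g neq_ij.
rewrite (irreducible_poly_coprime _ (irredp_iter_sigPinv _ _ irr_g)).
rewrite -(dvdp_iter_sigP E (j + i)) {2}addnC !iterD !iter_sigPinvK.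
by rewrite -(irreducible_poly_coprime _ (irredp_iter_sigP _ _ irr_g)) coprimep_iter_sigP // eq_sym.
Qed.

Lemma last_dvdp_iter_sigP g x k : x != 0 -> irreducible_poly g -> aperiodic E g ->
  iter k sg g %| x ->
  exists2 kk, (k <= kk)%N & iter kk sg g %| x /\ forall j, (kk < j)%N -> ~~ (iter j sg g %| x).
Proof.
move=> x_neq0 irr_g ap_g; apply: (exists_last_dvdp (h := fun j => iter j sg g)) => // [j|i j].
  by case: (irredp_iter_sigP E j irr_g).
exact: coprimep_iter_sigP.
Qed.

Lemma last_dvdp_iter_sigPinv g x : x != 0 -> irreducible_poly g -> aperiodic E g ->
  g %| x -> exists a, iter a sgi g %| x /\ forall j, (a < j)%N -> ~~ (iter j sgi g %| x).
Proof.
move=> x_neq0 irr_g ap_g g_x.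
have gt1 j : (1 < size (iter j sgi g))%N by case: (irredp_iter_sigPinv E j irr_g).
have [a _ ?] := exists_last_dvdp (h := fun j => iter j sgi g) (k := 0) x_neq0 gt1
  (fun i j => coprimep_iter_sigPinv irr_g ap_g) g_x.
by exists a.
Qed.

End Orbit.

Lemma is_max_of_exists (S : nat -> Prop) : exists e, is_max_of S e.
Proof.
have [[k0 Sk0]|none] := classic (exists k, S k); last first.
  by exists MInf => k Sk; apply: none; exists k.
have [[M ub]|unbounded] := classic (exists M, forall k, S k -> (k <= M)%N); last first.
  exists PInf => m; apply: NNPP => none; apply: unbounded; exists m => k Sk.
  by rewrite leqNgt; apply/negP => lt_mk; apply: none; exists k.
pose Sb k := if excluded_middle_informative (S k) then true else false.
have SbP k : Sb k <-> S k by rewrite /Sb; case: excluded_middle_informative.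
have [m /SbP Sm max_m] :=
  ex_maxnP (ex_intro Sb k0 ((SbP k0).2 Sk0)) (fun k Sbk => ub k ((SbP k).1 Sbk)).
by exists (Fin m); split=> // k /SbP /max_m.
Qed.

Section Disp.
Variables (F : fieldType) (E : PiSigma F).

Lemma disp_spec (a b : {poly F}) : is_max_of (spread E a b) (disp E a b).
Proof. by rewrite /disp; apply: epsilon_spec; apply: is_max_of_exists. Qed.

Lemma disp_le (a b a' b' : {poly F}) :
  (forall k, spread E a b k -> exists2 k', (k <= k')%N & spread E a' b' k') ->
  ext_le (disp E a b) (disp E a' b').
Proof.
move=> dom; move: (disp_spec a b) (disp_spec a' b').
case: (disp E a b) => [|m|] //=; case: (disp E a' b') => [|m'|] //=.
- by case=> /dom [k' _ Sk'] _ /(_ k').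
- by case=> /dom [k' le_mk' Sk'] _ [_ /(_ k' Sk')]; apply: leq_trans.
- by move=> /(_ 0%N) [k [/dom [k' _ Sk'] _]] /(_ k').
- move=> /(_ m') [k [/dom [k' le_kk' Sk'] lt_m'k]] [_ /(_ k' Sk') le_k'm'].
  by have := leq_ltn_trans le_k'm' (leq_trans lt_m'k le_kk'); rewrite ltnn.
Qed.

End Disp.

Lemma sum_window (V : nmodType) (g : int -> V) (c s : int) (L N : nat) :
  c <= s -> s + L%:Z <= c + N%:Z -> (forall k, (k < s) || (s + L%:Z <= k) -> g k = 0) ->
  \sum_(i < N) g (c + i%:Z) = \sum_(i < L) g (s + i%:Z).
Proof.
move=> le_cs le_sN g0.
have [a def_s] : exists a : nat, s = c + a%:Z by exists `|s - c|%N; lia.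
have [r def_N] : exists r, N = (a + L + r)%N by exists (N - (a + L))%N; lia.
rewrite def_N !big_split_ord /= [X in X + _ + _]big1 => [|i _]; last first.
  by apply: g0; have := ltn_ord i; rewrite /= def_s; lia.
rewrite [X in _ + X]big1 => [|i _]; last by apply: g0; rewrite /= def_s; lia.
by rewrite add0r addr0; apply: eq_bigr => i _; rewrite def_s /=; congr g; lia.
Qed.

Lemma iter_nmod_morphism (V : nmodType) (f : {additive V -> V}) k : nmod_morphism (iter k f).
Proof. by split=> [|x y]; elim: k => //= k ->; rewrite ?raddf0 ?raddfD. Qed.

Lemma iter_monoid_morphism (R : pzSemiRingType) (f : {rmorphism R -> R}) k :
  monoid_morphism (iter k f).
Proof. by split=> [|x y]; elim: k => //= k ->; rewrite ?rmorph1 ?rmorphM. Qed.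

Section SigmaPow.
Variables (F : fieldType) (E : PiSigma F).
Local Notation K := {fraction {poly F}}.

Lemma sKi_nmod_morphism : nmod_morphism (sKi E).
Proof. exact: can2_nmod_morphism (sKK E) (sKiK E). Qed.

Lemma sKi_monoid_morphism : monoid_morphism (sKi E).
Proof. exact: can2_monoid_morphism (sKK E) (sKiK E). Qed.

HB.instance Definition _ := GRing.isNmodMorphism.Build K K (sKi E) sKi_nmod_morphism.
HB.instance Definition _ := GRing.isMonoidMorphism.Build K K (sKi E) sKi_monoid_morphism.

Lemma spow_nmod_morphism c : nmod_morphism (spow E c).
Proof. by case: c => k; apply: iter_nmod_morphism. Qed.

Lemma spow_monoid_morphism c : monoid_morphism (spow E c).
Proof. by case: c => k; apply: iter_monoid_morphism. Qed.

HB.instance Definition _ c := GRing.isNmodMorphism.Build K K (spow E c) (spow_nmod_morphism c).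
HB.instance Definition _ c := GRing.isMonoidMorphism.Build K K (spow E c) (spow_monoid_morphism c).

Lemma spowSr c (x : K) : spow E (c + 1) x = spow E c (sK E x).
Proof.
case: c => [k|[|k]].
- by rewrite -[1]/(Posz 1) -PoszD addn1 /spow iterSr.
- by rewrite /= sKK.
- have -> : Negz k.+1 + 1 = Negz k by rewrite !NegzE; lia.
  by rewrite /spow [in RHS]iterSr sKK.
Qed.

Lemma spowDn c (k : nat) (x : K) : spow E (c + k%:Z) x = spow E c (spow E k x).
Proof.
elim: k x => [|k IH] x; first by rewrite addr0.
by rewrite -addn1 PoszD addrA spowSr IH /= addn1 -iterSr.
Qed.

Lemma iter_sK_frc k (a : {poly F}) : iter k (sK E) (frc a) = frc (iter k (sigP E) a).
Proof. by elim: k => //= k ->; rewrite sK_poly. Qed.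

Lemma map_spowDn c (k : nat) m n (M : 'M[K]_(m, n)) :
  map_mx (spow E (c + k%:Z)) M = map_mx (spow E c) (map_mx (spow E k) M).
Proof. by apply/matrixP => i j; rewrite !mxE spowDn. Qed.

End SigmaPow.

Section Operators.
Variables (F : fieldType) (E : PiSigma F) (n : nat).
Local Notation K := {fraction {poly F}}.
Implicit Types (A : seq 'M[{poly F}]_n) (y : 'cV[K]_n).

Lemma liftm0 p q : liftm (0 : 'M[{poly F}]_(p, q)) = 0.
Proof. by apply/matrixP => i j; rewrite !mxE /frc tofrac0. Qed.

Lemma nth_liftm A i : nth 0 (map (@liftm F n n) A) i = liftm (nth 0 A i).
Proof.
have [lt_iA|le_Ai] := ltnP i (size A); first by rewrite (nth_map 0).
by rewrite !nth_default ?size_map // liftm0.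
Qed.

Lemma lapply_polyop A y :
  lapply E (polyop A) y = \sum_(i < size A) liftm (nth 0 A i) *m map_mx (spow E i) y.
Proof. by rewrite /lapply /= size_map; apply: eq_bigr => i _; rewrite nth_liftm. Qed.

Lemma lcoef_polyop A (i : nat) : lcoef (polyop A) i = liftm (nth 0 A i).
Proof. by rewrite /lcoef /= addn0 nth_liftm. Qed.

Lemma lcoef_polyop_out A k : (k < 0) || ((size A)%:Z <= k) -> lcoef (polyop A) k = 0.
Proof.
move=> out_k; rewrite /lcoef /=; case: ifP => // le0k.
by rewrite nth_default ?size_map //; lia.
Qed.

Lemma map_lapply_polyop s A y :
  map_mx (spow E s) (lapply E (polyop A) y) =
  \sum_(i < size A) map_mx (spow E s) (liftm (nth 0 A i)) *m map_mx (spow E (s + i%:Z)) y.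
Proof.
rewrite lapply_polyop map_mx_sum; apply: eq_bigr => i _.
by rewrite map_mxM -map_spowDn.
Qed.

Lemma lapply_polyop_window A y (c : int) (N : nat) : c <= 0 -> (size A)%:Z <= c + N%:Z ->
  lapply E (polyop A) y =
  \sum_(i < N) lcoef (polyop A) (c + i%:Z) *m map_mx (spow E (c + i%:Z)) y.
Proof.
move=> le_c0 le_AN.
rewrite (sum_window (s := 0) (L := size A)
  (g := fun k => lcoef (polyop A) k *m map_mx (spow E k) y)) //; last first.
  by move=> k out_k; rewrite lcoef_polyop_out ?mul0mx // -(add0r k).
by rewrite lapply_polyop; apply: eq_bigr => i _; rewrite add0r lcoef_polyop.
Qed.

(* Both sides are sums of [C_k sigma^k y] over a common window of exponents k
   containing the supports of all the operators involved. *)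
Lemma lapply_lmul_polyop (P : lop F n) A At y :
  (forall k, lmul E P (polyop A) k = lcoef (polyop At) k) ->
  lapply E P (lapply E (polyop A) y) = lapply E (polyop At) y.
Proof.
move=> PA; set c : int := - `|lo P|%:Z.
set N := (`|lo P|.*2 + size (cs P) + size A + size At)%N.
rewrite (@lapply_polyop_window At y c N); [|rewrite /c; lia|rewrite /c /N; lia].
under eq_bigr => k _ do rewrite -PA /lmul mulmx_suml.
rewrite exchange_big /=; apply: eq_bigr => j _.
set s := lo P + j%:Z.
rewrite map_lapply_polyop mulmx_sumr (sum_window (s := s) (L := size A) (g := fun k =>
  nth 0 (cs P) j *m map_mx (spow E s) (lcoef (polyop A) (k - s)) *m map_mx (spow E k) y)).
- apply: eq_bigr => i _; have -> : s + i%:Z - s = i%:Z by rewrite addrC addKr.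
  by rewrite lcoef_polyop mulmxA.
- rewrite /s /c; lia.
- by have := ltn_ord j; rewrite /s /c /N; lia.
- move=> k out_k; rewrite lcoef_polyop_out ?map_mx0 ?mulmx0 ?mul0mx //.
  by move: out_k; rewrite /s; lia.
Qed.

End Operators.

Section PolyMatrices.
Variable F : fieldType.
Local Notation K := {fraction {poly F}}.

Definition polymx p q (M : 'M[K]_(p, q)) : Prop := forall i j, exists r, M i j = frc r.

Lemma frc_inj : injective (@frc F).
Proof. by move=> a b /eqP; rewrite /frc tofrac_eq => /eqP. Qed.

Lemma polymx0 p q : polymx (0 : 'M[K]_(p, q)).
Proof. by move=> i j; exists 0; rewrite mxE /frc tofrac0. Qed.

Lemma polymxB p q (M N : 'M[K]_(p, q)) : polymx M -> polymx N -> polymx (M - N).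
Proof.
move=> PM PN i j; have [r Mr] := PM i j; have [s Ns] := PN i j.
by exists (r - s); rewrite !mxE Mr Ns /frc tofracB.
Qed.

Lemma polymxD p q (M N : 'M[K]_(p, q)) : polymx M -> polymx N -> polymx (M + N).
Proof.
move=> PM PN i j; have [r Mr] := PM i j; have [s Ns] := PN i j.
by exists (r + s); rewrite !mxE Mr Ns /frc tofracD.
Qed.

Lemma polymx_sum p q (I : Type) (r : seq I) (P : pred I) (f : I -> 'M[K]_(p, q)) :
  (forall i, P i -> polymx (f i)) -> polymx (\sum_(i <- r | P i) f i).
Proof. by move=> Pf; apply: big_ind => //; [exact: polymx0 | exact: polymxD]. Qed.

Lemma polymx_liftm p q (M : 'M[{poly F}]_(p, q)) : polymx (liftm M).
Proof. by move=> i j; exists (M i j); rewrite mxE. Qed.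

Lemma polymxZ p q (c : {poly F}) (M : 'M[K]_(p, q)) : polymx M -> polymx (frc c *: M).
Proof. by move=> PM i j; have [r Mr] := PM i j; exists (c * r); rewrite mxE Mr /frc tofracM. Qed.

Lemma polymxM p q r (M : 'M[K]_(p, q)) (N : 'M[K]_(q, r)) :
  polymx M -> polymx N -> polymx (M *m N).
Proof.
move=> PM PN i j; rewrite mxE; apply: (big_ind (fun x => exists r, x = frc r)).
- by exists 0; rewrite /frc tofrac0.
- by move=> _ _ [a ->] [b ->]; exists (a + b); rewrite /frc tofracD.
- move=> k _; have [a ->] := PM i k; have [b ->] := PN k j.
  by exists (a * b); rewrite /frc tofracM.
Qed.

Lemma polymx_invmx n (M : 'M[{poly F}]_n) q D (v : 'cV[K]_n) :
  \det M != 0 -> has_denom (invmx (liftm M)) q ->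
  polymx (frc D *: (liftm M *m v)) -> polymx (frc (q * D) *: v).
Proof.
move=> detM_neq0 q_den PMv.
have M_unit : liftm M \in unitmx.
  by rewrite unitmxE /liftm det_map_mx unitfE /frc tofrac_eq0.
rewrite -(mulKmx M_unit v) /frc tofracM -scalerA scalemxAr scalemxAl.
by apply: polymxM => // i j; have [r qr] := q_den i j; exists r; rewrite mxE.
Qed.

End PolyMatrices.

Section Spread.
Variables (F : fieldType) (E : PiSigma F).
Implicit Types (a b g x : {poly F}).
Local Notation sg := (sigP E).
Local Notation sgi := (sigPinv E).

Lemma spread_irredp a b k :
  spread E a b k -> exists2 g, irreducible_poly g & g %| a /\ g %| iter k sg b.
Proof. by case/irredp_factor => g irr_g; rewrite dvdp_gcd => /andP [? ?]; exists g. Qed.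

Lemma spread_dvdp a b k g : a != 0 -> irreducible_poly g ->
  g %| a -> g %| iter k sg b -> spread E a b k.
Proof.
move=> a_neq0 [gt1_g _] g_a g_b; rewrite /spread.
have gcd_neq0 : gcdp a (iter k sg b) != 0 by rewrite gcdp_eq0 negb_and a_neq0.
by apply: leq_trans gt1_g (dvdp_leq gcd_neq0 _); rewrite dvdp_gcd g_a.
Qed.

Definition orbit_extremes x g (kk : nat) : Prop :=
  [/\ g %| x, iter kk sg g %| x,
      forall j, (0 < j)%N -> ~~ (iter j sgi g %| x) &
      forall j, (0 < j)%N -> ~~ (iter j sg (iter kk sg g) %| x)].

Lemma spread_orbit_extremes x k : x != 0 -> aperiodic E x -> spread E x x k ->
  exists2 g, irreducible_poly g /\ aperiodic E g &
    exists2 kk, (k <= kk)%N & orbit_extremes x g kk.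
Proof.
move=> x_neq0 ap_x /spread_irredp [f0 irr_f0 [f0_x f0_kx]].
set f := iter k sgi f0.
have f_x : f %| x by rewrite -(iter_sigPK E k x) dvdp_iter_sigPinv.
have irr_f : irreducible_poly f := irredp_iter_sigPinv E k irr_f0.
have [a [fa_x no_left]] := last_dvdp_iter_sigPinv x_neq0 irr_f (aperiodic_dvdp f_x ap_x) f_x.
set g := iter a sgi f.
have irr_g : irreducible_poly g := irredp_iter_sigPinv E a irr_f.
have ap_g : aperiodic E g := aperiodic_dvdp fa_x ap_x.
have gak_x : iter (k + a) sg g %| x by rewrite iterD /g !iter_sigPinvK.
have [kk le_kk [gkk_x no_right]] := last_dvdp_iter_sigP x_neq0 irr_g ap_g gak_x.
exists g => //; exists kk; first by apply: leq_trans le_kk; apply: leq_addr.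
split=> // j j_gt0; rewrite -iterD; [apply: no_left | apply: no_right]; lia.
Qed.

End Spread.

Section Solution.
Variables (F : fieldType) (E : PiSigma F) (n : nat).
Variables (d : {poly F}) (z : 'cV[{poly F}]_n).
Hypothesis red_dz : reduced d z.
Local Notation sg := (sigP E).
Local Notation sgi := (sigPinv E).
Local Notation y := ((frc d)^-1 *: liftm z).
Local Notation Y k := (map_mx (spow E (Posz k)) y).

Lemma reduced_denom_neq0 : d != 0. Proof. by case: red_dz. Qed.

Lemma reduced_ndvdp f : f %| d -> (1 < size f)%N -> exists i, ~~ (f %| z i 0).
Proof.
move=> f_d gt1_f; apply: NNPP => all_dvd.
have f_z i : f %| z i 0 by apply: NNPP => /negP f_zi; apply: all_dvd; exists i.
have f_gcd : f %| gcdp d (\big[@gcdp F/0]_(i < n) z i 0).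
  rewrite dvdp_gcd f_d; apply: (big_ind (fun q => f %| q)) => [|a b fa fb|i _].
  - exact: dvdp0.
  - by rewrite dvdp_gcd fa.
  - exact: f_z.
case: red_dz => _ /eqP sz_gcd.
have gcd_neq0 : gcdp d (\big[@gcdp F/0]_(i < n) z i 0) != 0 by rewrite -size_poly_eq0 sz_gcd.
by have := dvdp_leq gcd_neq0 f_gcd; rewrite sz_gcd leqNgt gt1_f.
Qed.

Lemma frc_iter_sigP_neq0 k : frc (iter k sg d) != 0.
Proof.
by rewrite /frc tofrac_eq0 -size_poly_eq0 size_iter_sigP size_poly_eq0 reduced_denom_neq0.
Qed.

Lemma sol_entry k i j : Y k i j = frc (iter k sg (z i j)) / frc (iter k sg d).
Proof. by rewrite !mxE rmorphM fmorphV /= !iter_sK_frc mulrC. Qed.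

Lemma polymx_sol k D : iter k sg d %| D -> polymx (frc D *: Y k).
Proof.
case/dvdpP => r -> i j; exists (r * iter k sg (z i j)).
by rewrite mxE sol_entry /frc !tofracM -mulrA [X in _ * X]mulrC divfK ?frc_iter_sigP_neq0.
Qed.

Lemma polymx_sol_dvdp k q : polymx (frc q *: Y k) -> forall i, iter k sg d %| q * iter k sg (z i 0).
Proof.
move=> Pq i; have [r] := Pq i 0; rewrite mxE sol_entry mulrA.
move/(canRL (divfK (frc_iter_sigP_neq0 k))); rewrite /frc -!tofracM => /frc_inj ->.
exact: dvdp_mull.
Qed.

(* Isolate the i0-th term of A(y) = b: the others have denominators sigma^j d. *)
Lemma polymx_sol_term (A : seq 'M[{poly F}]_n) b (i0 : 'I_(size A)) :
  lapply E (polyop A) y = liftm b ->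
  polymx (frc (\prod_(j < size A | j != i0) iter j sg d) *: (liftm (nth 0 A i0) *m Y i0)).
Proof.
move=> sol; have -> : liftm (nth 0 A i0) *m Y i0 =
    liftm b - \sum_(j < size A | j != i0) liftm (nth 0 A j) *m Y j.
  by rewrite -sol lapply_polyop (bigD1 i0) //= addrK.
rewrite scalerBr; apply: polymxB; first exact/polymxZ/polymx_liftm.
rewrite scaler_sumr; apply: polymx_sum => j j_i0.
rewrite scalemxAr; apply: polymxM; first exact: polymx_liftm.
by apply: polymx_sol; rewrite (bigD1 j) //= dvdp_mulr.
Qed.

Lemma irredp_dvdp_denom (A : seq 'M[{poly F}]_n) b (i0 : 'I_(size A)) q g :
  lapply E (polyop A) y = liftm b -> \det (nth 0 A i0) != 0 ->
  has_denom (invmx (liftm (nth 0 A i0))) q -> irreducible_poly g ->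
  g %| iter i0 sg d -> (forall j : 'I_(size A), j != i0 -> coprimep g (iter j sg d)) ->
  g %| q.
Proof.
move=> sol det_neq0 q_den irr_g g_d coprime_g.
have Pq := polymx_invmx det_neq0 q_den (polymx_sol_term i0 sol).
have gi0_d : iter i0 sgi g %| d by rewrite -(iter_sigPK E i0 d) dvdp_iter_sigPinv.
have [i g_zi] : exists i, ~~ (g %| iter i0 sg (z i 0)).
  have [|i] := reduced_ndvdp gi0_d; first by rewrite size_iter_sigPinv; case: irr_g.
  by rewrite -(dvdp_iter_sigP E i0) iter_sigPinvK; exists i.
have := dvdp_trans g_d (polymx_sol_dvdp Pq i).
rewrite Gauss_dvdpl ?irreducible_poly_coprime // Gauss_dvdpl //.
apply: (big_ind (coprimep g)) => [|a c ga gc|]; first exact: coprimep1.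
  by rewrite coprimepMr ga gc.
exact: coprime_g.
Qed.

Lemma orbit_extremes_lead_denom (A : seq 'M[{poly F}]_n) b l m g kk :
  size A = l.+1 -> lapply E (polyop A) y = liftm b -> \det (nth 0 A l) != 0 ->
  has_denom (invmx (liftm (nth 0 A l))) m -> irreducible_poly g ->
  orbit_extremes E (ap E d) g kk -> iter l sg (iter kk sg g) %| m.
Proof.
move=> sz_A sol det_neq0 m_den irr_g [_ h_ad _ no_right].
set h := iter kk sg g; have irr_h : irreducible_poly h := irredp_iter_sigP E kk irr_g.
have ap_h : aperiodic E h := aperiodic_dvdp h_ad (aperiodic_ap E reduced_denom_neq0).
have lt_lA : (l < size A)%N by rewrite sz_A.
apply: (irredp_dvdp_denom (i0 := Ordinal lt_lA) sol) => //=.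
- exact: irredp_iter_sigP.
- by rewrite dvdp_iter_sigP (dvdp_trans h_ad) ?ap_dvdp.
move=> j; rewrite -val_eqE /= => j_neq_l.
have lt_jl : (j < l)%N.
  by move: (ltn_ord j) j_neq_l; move: (nat_of_ord j) => i; rewrite sz_A; lia.
rewrite (irreducible_poly_coprime _ (irredp_iter_sigP E l irr_h)).
rewrite -(subnKC (ltnW lt_jl)) iterD dvdp_iter_sigP.
have lj_gt0 : (0 < l - j)%N by rewrite subn_gt0.
apply: contraNN (no_right _ lj_gt0) => hlj_d.
by apply: irredp_dvdp_ap hlj_d; [apply: irredp_iter_sigP | rewrite aperiodic_iter_sigP].
Qed.

Lemma orbit_extremes_trail_denom (At : seq 'M[{poly F}]_n) bt p g kk :
  (0 < size At)%N -> lapply E (polyop At) y = liftm bt -> \det (nth 0 At 0) != 0 ->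
  has_denom (invmx (liftm (nth 0 At 0))) p -> irreducible_poly g ->
  orbit_extremes E (ap E d) g kk -> g %| p.
Proof.
move=> lt_0At sol det_neq0 p_den irr_g [g_ad _ no_left _].
have ap_g : aperiodic E g := aperiodic_dvdp g_ad (aperiodic_ap E reduced_denom_neq0).
apply: (irredp_dvdp_denom (i0 := Ordinal lt_0At) sol) => //=.
  exact: dvdp_trans g_ad (ap_dvdp E d).
move=> j; rewrite -val_eqE /= -lt0n => j_gt0.
rewrite irreducible_poly_coprime // -(dvdp_iter_sigPinv E j) iter_sigPK.
apply: contraNN (no_left _ j_gt0) => gj_d.
by apply: irredp_dvdp_ap gj_d; [apply: irredp_iter_sigPinv | rewrite aperiodic_iter_sigPinv].
Qed.

End Solution.

Theorem lemma3 (F : fieldType) (E : PiSigma F) (n : nat)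
  (l : nat) (A : seq 'M[{poly F}]_n) (b : 'cV[{poly F}]_n)
  (HA : size A = l.+1) (HAl : \det (nth 0 A l) != 0)
  (P : lop F n) (HP : unimodular E P)
  (lt : nat) (At : seq 'M[{poly F}]_n) (HAt : size At = lt.+1)
  (HPA : forall k : int, lmul E P (polyop A) k = lcoef (polyop At) k)
  (bt : 'cV[{poly F}]_n) (HPb : lapply E P (liftm b) = liftm bt)
  (HAt0 : \det (nth 0 At 0) != 0)
  (m p : {poly F})
  (Hm : common_denom (invmx (liftm (nth 0 A l))) m)
  (Hp : common_denom (invmx (liftm (nth 0 At 0))) p)
  (d : {poly F}) (z : 'cV[{poly F}]_n) (Hred : reduced d z)
  (Hsol : lapply E (polyop A) ((frc d)^-1 *: liftm z) = liftm b) :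
  ext_le (disp E (ap E d) (ap E d))
         (disp E (iter l (sigPinv E) (ap E m)) (ap E p)).
Proof.
have d_neq0 := reduced_denom_neq0 Hred.
have [m_neq0 m_den _] := Hm; have [_ p_den _] := Hp.
have solt : lapply E (polyop At) ((frc d)^-1 *: liftm z) = liftm bt.
  by rewrite -(lapply_lmul_polyop _ HPA) Hsol HPb.
apply: disp_le => k /(spread_orbit_extremes (ap_neq0 E d_neq0) (aperiodic_ap E d_neq0)).
case=> g [irr_g ap_g] [kk le_kk ext_g]; exists kk => //.
apply: (spread_dvdp (g := iter kk (sigP E) g)).
- by rewrite -size_poly_eq0 size_iter_sigPinv size_poly_eq0 ap_neq0.
- exact: irredp_iter_sigP.
- rewrite -(dvdp_iter_sigP E l) iter_sigPinvK; apply: irredp_dvdp_ap.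
  + by do 2 apply: irredp_iter_sigP.
  + by rewrite !aperiodic_iter_sigP.
  + exact: (orbit_extremes_lead_denom Hred HA Hsol HAl m_den irr_g ext_g).
- rewrite dvdp_iter_sigP; apply: irredp_dvdp_ap => //.
  by apply: (orbit_extremes_trail_denom Hred _ solt HAt0 p_den irr_g ext_g); rewrite HAt.
Qed.
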